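(* If a history-deterministic one-counter net $\mathcal{N}=(Q,\Sigma,\Delta,q_0,F)$ satisfies the semilinear-strategy property, then there is a deterministic one-counter automaton $\mathcal{D}$ with $\mathcal{L}(\mathcal{D})=\mathcal{L}(\mathcal{N})$.
   Context: A one-counter net (OCN) is $\mathcal{N}=(Q,\Sigma,\Delta,q_0,F)$ with $Q$ finite, $\Sigma$ finite, $q_0\in Q$, $F\subseteq Q$, $\Delta\subseteq Q\times\Sigma\times\{-1,0,1\}\times Q$; configurations $(q,n)\in Q\times\mathbb{N}$, step $(q,n)\xrightarrow{a,d}(p,n+d)$ if $(q,a,d,p)\in\Delta$ and $n+d\ge0$; runs start at $(q_0,0)$ and are accepting if the last state is in $F$; $\mathcal{L}(\mathcal{N})$ is the set of words with an accepting run. Letter game: positions $(c,w)$, start $((q_0,0),\varepsilon)$; each round Adam picks $a\in\Sigma$, Eve picks a step $c\xrightarrow{a,d}c'$; if Eve has none and $wa$ is a prefix of a word of $\mathcal{L}(\mathcal{N})$ she loses; if $wa\in\mathcal{L}(\mathcal{N})$ but the state of $c'$ is not in $F$, Adam wins; otherwise continue; Eve wins infinite plays. $\mathcal{N}$ is history-deterministic if Eve wins the letter game. The game $G_1$ from $(c^E,c^A)$: each round Adam picks $a$; Eve moves her token $c^E\xrightarrow{a,d}c^E_+$; Adam moves his $c^A\xrightarrow{a,d'}c^A_+$; Adam loses if he cannot move; Eve loses if she cannot move while Adam can move and extend to an accepting run, or if $c^A_+$ has an accepting state and $c^E_+$ does not; Eve wins infinite plays. A transition $\delta=(p,a,d,p')$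 is good at $(p,k)$ if Eve wins $G_1$ from $((p,k),(p,k))$ and the step $(p,k)\xrightarrow{a,d}(p',k+d)$ is a winning move for Eve when Adam picks $a$. $\mathcal{N}$ satisfies the semilinear-strategy property if for every $\delta\in\Delta$ the set $\mathcal{S}_\delta=\{k\in\mathbb{N}:\delta\text{ is good at }(p,k)\}$ is semilinear (a finite union of arithmetic progressions, i.e. eventually periodic). A one-counter automaton is $(Q,\Sigma,\Delta,q_0,F)$ with $\Delta\subseteq Q\times\{\mathrm{zero},\neg\mathrm{zero}\}\times\Sigma\times\{-1,0,1\}\times Q$, $\mathrm{zero}$-transitions usable only at counter $0$ (update in $\{0,1\}$), $\neg\mathrm{zero}$-transitions only at positive counter; it is deterministic if $\Delta$ is a partial function from $Q\times\{\mathrm{zero},\neg\mathrm{zero}\}\times\Sigma$ to $\{-1,0,1\}\times Q$. *)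

From mathcomp Require Import all_boot all_algebra.
Set Implicit Arguments. Unset Strict Implicit. Unset Printing Implicit Defensive.
Import GRing.Theory Num.Theory.

Record ocn (Sigma : finType) := OCN {
  ocn_Q : finType;
  ocn_Delta : ocn_Q -> Sigma -> int -> ocn_Q -> bool;
  ocn_q0 : ocn_Q;
  ocn_F : {set ocn_Q};
  ocn_wf : forall q a d p, ocn_Delta q a d p -> d \in [:: (-1)%R; 0%R; 1%R]
}.
Arguments ocn_Delta {Sigma} o _ _ _ _.
Arguments ocn_q0 {Sigma} o.
Arguments ocn_F {Sigma} o.

Section OCN.
Variables (Sigma : finType) (N : ocn Sigma).

Definition nconf := (ocn_Q N * nat)%type.

(* (q,n) --a,d--> (p,n+d), requires (q,a,d,p) in Delta and n+d >= 0
   (the latter is automatic since the target counter is a nat). *)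
Definition nstep (c : nconf) (a : Sigma) (d : int) (c' : nconf) : Prop :=
  ocn_Delta N c.1 a d c'.1 /\ (Posz c.2 + d)%R = Posz c'.2.

Inductive nreach : nconf -> seq Sigma -> nconf -> Prop :=
| nreach0 c : nreach c [::] c
| nreachS c a d c1 w c2 : nstep c a d c1 -> nreach c1 w c2 -> nreach c (a :: w) c2.

Definition ninit : nconf := (ocn_q0 N, 0%N).

Definition nlang (w : seq Sigma) : Prop :=
  exists c, nreach ninit w c /\ c.1 \in ocn_F N.

Definition nprefix (w : seq Sigma) : Prop := exists v, nlang (w ++ v).

(* A strategy of Eve maps the word read so far (including Adam's current
   letter) to the transition (d,p) she takes, or None. Her own earlier
   choices are determined by the strategy, so this is no loss of generality. *)
Definition lstrat := seq Sigma -> option (int * ocn_Q N).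

Inductive lrun (s : lstrat) : seq Sigma -> nconf -> Prop :=
| lrun0 : lrun s [::] ninit
| lrunS w c a d p c' : lrun s w c -> s (rcons w a) = Some (d, p) ->
    nstep c a d c' -> c'.1 = p -> lrun s (rcons w a) c'.

Definition lwinning (s : lstrat) : Prop :=
  forall w c a, lrun s w c ->
    ((~ exists c', lrun s (rcons w a) c') -> ~ nprefix (rcons w a)) /\
    (forall c', lrun s (rcons w a) c' -> nlang (rcons w a) -> c'.1 \in ocn_F N).

Definition history_deterministic : Prop := exists s, lwinning s.

(* Eve's strategy sees the history (letters and Adam's transitions in the
   previous rounds) and the current letter; it returns her transition. *)
Definition gstrat := seq (Sigma * (int * ocn_Q N)) -> Sigma -> option (int * ocn_Q N).

Inductive g1play (s : gstrat) (cE0 cA0 : nconf) :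
  seq (Sigma * (int * ocn_Q N)) -> nconf -> nconf -> Prop :=
| g1play0 : g1play s cE0 cA0 [::] cE0 cA0
| g1playS h cE cA a dE cE' dA cA' :
    g1play s cE0 cA0 h cE cA ->
    s h a = Some (dE, cE'.1) -> nstep cE a dE cE' ->
    nstep cA a dA cA' ->
    g1play s cE0 cA0 (rcons h (a, (dA, cA'.1))) cE' cA'.

Definition g1move (s : gstrat) h a (cE cE' : nconf) : Prop :=
  exists dE, s h a = Some (dE, cE'.1) /\ nstep cE a dE cE'.

(* s wins G_1 from (cE0,cA0): in every reachable round,
   - if Eve cannot move, Adam cannot move and extend to an accepting run;
   - if Adam's new configuration is accepting, so is Eve's.
   (Adam loses when he cannot move; infinite plays are won by Eve.) *)
Definition g1winning (s : gstrat) (cE0 cA0 : nconf) : Prop :=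
  forall h cE cA a, g1play s cE0 cA0 h cE cA ->
    ((~ exists cE', g1move s h a cE cE') ->
       ~ exists u c, nreach cA (a :: u) c /\ c.1 \in ocn_F N) /\
    (forall cE' dA cA', g1move s h a cE cE' -> nstep cA a dA cA' ->
       cA'.1 \in ocn_F N -> cE'.1 \in ocn_F N).

Definition good (p : ocn_Q N) (a : Sigma) (d : int) (p' : ocn_Q N) (k : nat) : Prop :=
  exists s : gstrat, g1winning s (p, k) (p, k) /\
    s [::] a = Some (d, p') /\ exists k', nstep (p, k) a d (p', k').

End OCN.

(* Semilinear subsets of nat: finite unions of arithmetic progressions
   {b + per * i | i in nat} (per = 0 gives singletons). *)
Definition semilinear (S : nat -> Prop) : Prop :=
  exists ps : seq (nat * nat),
    forall k, S k <-> exists2 bp, bp \in ps & exists i, k = (bp.1 + bp.2 * i)%N.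

Definition semilinear_strategy (Sigma : finType) (N : ocn Sigma) : Prop :=
  forall p a d p', ocn_Delta N p a d p' -> semilinear (good p a d p').

(* oca_Delta q z a d p : transition (q, zero/not-zero, a, d, p),
   z = true meaning the "zero" test. *)
Record oca (Sigma : finType) := OCA {
  oca_Q : finType;
  oca_Delta : oca_Q -> bool -> Sigma -> int -> oca_Q -> bool;
  oca_q0 : oca_Q;
  oca_F : {set oca_Q};
  oca_wf : forall q z a d p, oca_Delta q z a d p ->
     d \in [:: (-1)%R; 0%R; 1%R] /\ (z -> d \in [:: 0%R; 1%R])
}.
Arguments oca_Delta {Sigma} o _ _ _ _ _.
Arguments oca_q0 {Sigma} o.
Arguments oca_F {Sigma} o.

Section OCA.
Variables (Sigma : finType) (D : oca Sigma).

Definition dconf := (oca_Q D * nat)%type.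

Definition dstep (c : dconf) (a : Sigma) (d : int) (c' : dconf) : Prop :=
  oca_Delta D c.1 (c.2 == 0%N) a d c'.1 /\ (Posz c.2 + d)%R = Posz c'.2.

Inductive dreach : dconf -> seq Sigma -> dconf -> Prop :=
| dreach0 c : dreach c [::] c
| dreachS c a d c1 w c2 : dstep c a d c1 -> dreach c1 w c2 -> dreach c (a :: w) c2.

Definition dlang (w : seq Sigma) : Prop :=
  exists c, dreach (oca_q0 D, 0%N) w c /\ c.1 \in oca_F D.

Definition oca_deterministic : Prop :=
  forall q z a d p d' p', oca_Delta D q z a d p -> oca_Delta D q z a d' p' ->
    d = d' /\ p = p'.

End OCA.

From Pilot Require Import Defs.
From mathcomp Require Import all_boot all_algebra.
From mathcomp Require Import zify ring boolp.
Set Implicit Arguments. Unset Strict Implicit. Unset Printing Implicit Defensive.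
Import GRing.Theory.

(* Since Eve wins the letter game, she wins G_1 from the initial configuration.
   Wherever Eve wins G_1 and some continuation a u is accepted, her winning
   strategy takes a good transition on a; she still wins G_1 afterwards, and
   since in G_1 she can answer every accepting run of Adam, each u accepted
   after a from the old configuration is accepted from the new one. Hence
   following a fixed choice of good transitions, one for each state, counter
   value and letter, accepts exactly L(N). By the semilinear-strategy property
   such a choice is eventually periodic in the counter value, with threshold
   and period both fitting in one block length M. A deterministic one-counter
   automaton keeps the counter value modulo M in its state and the number of
   complete blocks on its counter; its zero test tells the first block, where
   the choice need not be periodic yet, from the others. *)

Section Runs.
Variables (Sigma : finType) (N : ocn Sigma).
Implicit Types (c : nconf N) (u w : seq Sigma) (a : Sigma) (d : int).

Lemma nstep_uniq c c1 c2 a d :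
  nstep c a d c1 -> nstep c a d c2 -> c1.1 = c2.1 -> c1 = c2.
Proof.
case: c1 c2 => [p1 k1] [p2 k2] [_ e1] [_ e2] /= ->.
by rewrite e1 in e2; case: e2 => ->.
Qed.

Lemma nreach_cat c c1 c2 u w :
  nreach c u c1 -> nreach c1 w c2 -> nreach c (u ++ w) c2.
Proof. by elim=> // {}c a d c' u' c'' St _ IH /IH; apply: nreachS St. Qed.

Lemma nreach_rcons c c1 c2 w a d :
  nreach c w c1 -> nstep c1 a d c2 -> nreach c (rcons w a) c2.
Proof. by rewrite -cats1 => R St; apply: nreach_cat R (nreachS St (nreach0 _)). Qed.

Lemma nreach_nilE c c' : nreach c [::] c' -> c' = c.
Proof. by move=> R; inversion R. Qed.

Lemma nreach_consE c c' a u :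
  nreach c (a :: u) c' -> exists d c1, nstep c a d c1 /\ nreach c1 u c'.
Proof. by move=> R; inversion R; exists d, c1. Qed.

Definition nlang_from c u := exists c', nreach c u c' /\ c'.1 \in ocn_F N.

Lemma lrun_nilE (s : lstrat N) c : lrun s [::] c -> c = ninit N.
Proof. by move Ew: [::] => w L; case: L Ew => // w' c' a; case: w'. Qed.

Lemma lrun_rconsE (s : lstrat N) w a c' : lrun s (rcons w a) c' ->
  exists c d, [/\ lrun s w c, s (rcons w a) = Some (d, c'.1) & nstep c a d c'].
Proof.
move Ewa: (rcons w a) => wa L; case: L Ewa => [|w0 c a0 d p {}c' L Hs St Ep]; first by case: w.
by case/rcons_inj=> Ew Ea; subst; exists c, d.
Qed.

Lemma lrun_uniq (s : lstrat N) w c1 c2 : lrun s w c1 -> lrun s w c2 -> c1 = c2.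
Proof.
elim/last_ind: w c1 c2 => [|w a IH] c1 c2; first by move=> /lrun_nilE -> /lrun_nilE.
case/lrun_rconsE=> c [d [L1 Hs1 St1]]; case/lrun_rconsE=> c' [d' [L2 Hs2 St2]].
rewrite -(IH _ _ L1 L2) in St2.
rewrite Hs1 in Hs2; case: Hs2 => Ed E; rewrite -Ed in St2.
exact: nstep_uniq St1 St2 E.
Qed.

Definition eve_wins_g1 c := exists s : gstrat N, g1winning s c c.

(* Eve answers Adam's accepting run step by step: the first clause of
   g1winning says she can always move, the second that she ends accepting. *)
Lemma g1winning_nlang_from (s : gstrat N) c0 c0' u h cE cA :
  g1winning s c0 c0' -> g1play s c0 c0' h cE cA ->
  (cA.1 \in ocn_F N -> cE.1 \in ocn_F N) -> nlang_from cA u -> nlang_from cE u.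
Proof.
move=> W; elim: u h cE cA => [|a u IH] h cE cA P FE [c [R Fc]].
  by move/nreach_nilE: R Fc => -> /FE; exists cE; split=> //; apply: nreach0.
have [dA [cA' [StA RA]]] := nreach_consE R.
have [W1 W2] := W h cE cA a P.
have [[cE' Hm]|NM] := EM (exists cE', g1move s h a cE cE'); last first.
  by case: (W1 NM); exists u, c; split=> //; apply: nreachS StA RA.
have [dE [Hs StE]] := Hm.
have [|c' [R' Fc']] := IH _ _ _ (g1playS P Hs StE StA) (W2 _ _ _ Hm StA).
  by exists c.
by exists c'; split=> //; apply: nreachS StE R'.
Qed.

Lemma history_deterministic_eve_wins_g1 :
  history_deterministic N -> eve_wins_g1 (ninit N).
Proof.
case=> s W; pose t : gstrat N := fun h a => s (rcons (map fst h) a).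
have play_runs h cE cA : g1play t (ninit N) (ninit N) h cE cA ->
    lrun s (map fst h) cE /\ nreach (ninit N) (map fst h) cA.
  elim=> [|{}h {}cE {}cA a dE cE' dA cA' _ [LE RA] Hs StE StA].
    by split; constructor.
  by rewrite map_rcons; split; [apply: lrunS LE Hs StE _ | apply: nreach_rcons RA StA].
exists t => h cE cA a /play_runs [LE RA]; have [W1 W2] := W _ _ a LE.
split=> [NM [u [c [R Fc]]]|cE' dA cA' [dE [Hs StE]] StA FA].
  apply: W1; last by exists u, c; rewrite cat_rcons; split=> //; apply: nreach_cat RA R.
  case=> cE' /lrun_rconsE [c' [d [L Hs StE]]].
  by rewrite (lrun_uniq L LE) in StE; apply: NM; exists cE', d.
apply: (W2 cE'); first exact: lrunS LE Hs StE erefl.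
by exists cA'; split=> //; apply: nreach_rcons RA StA.
Qed.

Lemma eve_wins_g1_good p k a u : eve_wins_g1 (p, k) -> nlang_from (p, k) (a :: u) ->
  exists d p' k', good p a d p' k /\ nstep (p, k) a d (p', k').
Proof.
case=> s W [c [R Fc]].
have [W1 _] := W [::] (p, k) (p, k) a (g1play0 _ _ _).
have [[[p' k'] [d [Hs St]]]|NM] := EM (exists c', g1move s [::] a (p, k) c').
  by exists d, p', k'; split=> //; exists s; split=> //; split=> //; exists k'.
by case: (W1 NM); exists u, c.
Qed.

Lemma g1play_cons (s : gstrat N) c0 c1 a d h cE cA :
  s [::] a = Some (d, c1.1) -> nstep c0 a d c1 ->
  g1play (fun h => s ((a, (d, c1.1)) :: h)) c1 c1 h cE cA ->
  g1play s c0 c0 ((a, (d, c1.1)) :: h) cE cA.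
Proof.
move=> Hs0 St0; elim=> [|{}h {}cE {}cA b dE cE' dA cA' _ IH HsE StE StA].
  exact: (g1playS (g1play0 s c0 c0) Hs0 St0 St0).
exact: g1playS IH HsE StE StA.
Qed.

Lemma good_eve_wins_g1 p a d p' k k' :
  good p a d p' k -> nstep (p, k) a d (p', k') -> eve_wins_g1 (p', k').
Proof.
case=> s [W [Hs _]] St; exists (fun h => s ((a, (d, p')) :: h)) => h cE cA b P.
exact: W _ _ _ b (g1play_cons (c1 := (p', k')) Hs St P).
Qed.

Lemma good_nlang_from p a d p' k k' u : good p a d p' k -> nstep (p, k) a d (p', k') ->
  nlang_from (p, k) (a :: u) -> nlang_from (p', k') u.
Proof.
case=> s [W [Hs _]] St [c [R Fc]].
have [dA [cA [StA RA]]] := nreach_consE R.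
have P := g1playS (cE' := (p', k')) (g1play0 s _ _) Hs St StA.
apply: (g1winning_nlang_from W P); last by exists c.
have [_ W2] := W [::] (p, k) (p, k) a (g1play0 _ _ _).
by apply: W2 StA; exists d.
Qed.

End Runs.

Definition eventually_periodic (T P : nat) (S : nat -> Prop) :=
  0 < P /\ forall m k, T <= k -> (S (k + m * P) <-> S k).

Lemma eventually_periodic_widen T P S T' Q :
  eventually_periodic T P S -> T <= T' -> 0 < Q -> eventually_periodic T' (Q * P) S.
Proof.
case=> P_gt0 HS TT' Q_gt0; split=> [|m k Hk]; first by rewrite muln_gt0 Q_gt0.
by rewrite mulnA; apply: HS; apply: leq_trans Hk.
Qed.

Lemma eventually_periodic_ext T P S S' :
  (forall k, S k <-> S' k) -> eventually_periodic T P S -> eventually_periodic T P S'.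
Proof. by move=> E [P_gt0 HS]; split=> // m k Hk; rewrite -!E; apply: HS. Qed.

Lemma eventually_periodicU T1 P1 S1 T2 P2 S2 :
  eventually_periodic T1 P1 S1 -> eventually_periodic T2 P2 S2 ->
  eventually_periodic (maxn T1 T2) (P1 * P2) (fun k => S1 k \/ S2 k).
Proof.
move=> H1 H2; have [_ H1'] := eventually_periodic_widen H1 (leq_maxl T1 T2) H2.1.
have [_ H2'] := eventually_periodic_widen H2 (leq_maxr T1 T2) H1.1.
split=> [|m k Hk]; first by rewrite muln_gt0 H1.1 H2.1.
by rewrite H2' // [P1 * P2]mulnC H1'.
Qed.

Lemma progression_dvd b q k : (exists i, k = b + q * i) <-> (b <= k) && (q %| k - b).
Proof.
split=> [[i ->]|/andP [Hb Hd]]; first by rewrite leq_addr addKn dvdn_mulr.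
by exists ((k - b) %/ q); rewrite mulnC divnK // subnKC.
Qed.

Lemma progression_eventually_periodic b q :
  exists T P, eventually_periodic T P (fun k => exists i, k = b + q * i).
Proof.
have [->|q_gt0] := posnP q.
  exists b.+1, 1; split=> // m k Hk.
  by rewrite !progression_dvd !dvd0n !subn_eq0; split=> /andP []; lia.
exists b, q; split=> // m k Hk.
rewrite !progression_dvd Hk (leq_trans Hk (leq_addr _ _)) /= -addnBAC //.
by rewrite dvdn_addl // dvdn_mull.
Qed.

Lemma semilinear_eventually_periodic S :
  Defs.semilinear S -> exists T P, eventually_periodic T P S.
Proof.
case=> ps E.
suff [T [P HS]] : exists T P, eventually_periodic T P
    (fun k => exists2 bp, bp \in ps & exists i, k = bp.1 + bp.2 * i).
  by exists T, P; apply: eventually_periodic_ext HS => k; rewrite E.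
elim: ps {E} => [|bp ps [T [P IH]]]; first by exists 0, 1; split=> // m k _; split; case.
have [T1 [P1 H1]] := progression_eventually_periodic bp.1 bp.2.
exists (maxn T1 T), (P1 * P); apply: eventually_periodic_ext (eventually_periodicU H1 IH).
move=> k; split=> [[Hk|[bp' Hbp' Hk]]|[bp' /[!inE] /predU1P [-> //|Hbp'] Hk]].
- by exists bp; rewrite ?mem_head.
- by exists bp'; rewrite // inE Hbp' orbT.
- by left.
- by right; exists bp'.
Qed.

Lemma eventually_periodic_family (I : finType) (S : I -> nat -> Prop) :
  (forall i, exists T P, eventually_periodic T P (S i)) ->
  exists T P, 0 < P /\ forall i, eventually_periodic T P (S i).
Proof.
move=> HS.
suff [T [P [P_gt0 HT]]] : exists T P, 0 < P /\ {in enum I, forall i, eventually_periodic T P (S i)}.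
  by exists T, P; split=> // i; apply: HT; rewrite mem_enum.
elim: (enum I) => [|i s [T [P [P_gt0 IH]]]]; first by exists 0, 1.
have [Ti [Pi Hi]] := HS i.
exists (maxn Ti T), (Pi * P); split=> [|j /predU1P [->|Hj]]; first by rewrite muln_gt0 Hi.1.
  by rewrite mulnC; apply: eventually_periodic_widen Hi (leq_maxl _ _) P_gt0.
exact: eventually_periodic_widen (IH j Hj) (leq_maxr _ _) Hi.1.
Qed.

Lemma digit_carry_add (M n r n' r' : nat) (dN dD : int) :
  (Posz r + dN = Posz r' + dD * Posz M)%R -> (Posz n + dD = Posz n')%R ->
  (Posz (n * M + r) + dN = Posz (n' * M + r'))%R.
Proof.
move=> Er En; have -> : dN = (Posz r' + dD * Posz M - Posz r)%R by rewrite -Er addrC addKr.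
rewrite !PoszD !PoszM -En; ring.
Qed.

Lemma digit_carry_exists (M n r k : nat) (dN : int) : r < M ->
  dN \in [:: (-1)%R; 0%R; 1%R] -> (Posz (n * M + r) + dN)%R = Posz k ->
  exists (dD : int) (r' n' : nat), [/\ r' < M, dD \in [:: (-1)%R; 0%R; 1%R],
    (n == 0) ==> (dD != (-1)%R), (Posz r + dN = Posz r' + dD * Posz M)%R &
    (Posz n + dD)%R = Posz n'].
Proof.
move=> r_lt; rewrite !inE => /or3P [] /eqP -> E.
- case: r r_lt E => [|r] r_lt E; last by exists 0%R, r, n; split; rewrite ?implybT //; lia.
  case: n E => [|n] E; first by move: E; rewrite mul0n; lia.
  by exists (-1)%R, M.-1, n; split; rewrite ?implybT //; lia.
- by exists 0%R, r, n; split; rewrite ?implybT //; lia.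
- have [r1_lt|] := ltnP r.+1 M; first by exists 0%R, r.+1, n; split; rewrite ?implybT //; lia.
  by exists 1%R, 0, n.+1; split; rewrite ?implybT //; lia.
Qed.

Section GoodChoice.
Variables (Sigma : finType) (N : ocn Sigma).
Implicit Types (p : ocn_Q N) (a : Sigma) (k : nat).

(* The update [i - 1] is coded by [i : 'I_3], so that transitions range over
   the finite type ['I_3 * ocn_Q N] and one of them can be picked. *)
Definition ord_update (i : 'I_3) : int := (Posz i - 1)%R.

Definition good_choice p k a : option ('I_3 * ocn_Q N) :=
  [pick x | `[< good p a (ord_update x.1) x.2 k >] ].

Lemma good_ocn_Delta p a d p' k : good p a d p' k -> ocn_Delta N p a d p'.
Proof. by case=> s [_ [_ [k' [Hd _]]]]. Qed.

Lemma good_choice_good p k a x :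
  good_choice p k a = Some x -> good p a (ord_update x.1) x.2 k.
Proof. by rewrite /good_choice; case: pickP => // y /asboolP Hy [<-]. Qed.

Lemma good_choice_some p a d p' k : good p a d p' k -> exists x, good_choice p k a = Some x.
Proof.
move=> G; rewrite /good_choice; case: pickP => [x _|none]; first by exists x.
have [i Ei] : exists i, ord_update i = d.
  move: (ocn_wf (good_ocn_Delta G)); rewrite !inE => /or3P [] /eqP ->.
  - by exists (@Ordinal 3 0 isT).
  - by exists (@Ordinal 3 1 isT).
  - by exists (@Ordinal 3 2 isT).
by move: (none (i, p')) => /asboolP []; rewrite /= Ei.
Qed.

Lemma good_choice_periodic : semilinear_strategy N -> exists T P, 0 < P /\
  forall p a m k, T <= k -> good_choice p (k + m * P) a = good_choice p k a.
Proof.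
move=> SL.
have [|T [P [P_gt0 HP]]] := eventually_periodic_family
    (S := fun (i : ocn_Q N * Sigma * ('I_3 * ocn_Q N)) k =>
       good i.1.1 i.1.2 (ord_update i.2.1) i.2.2 k).
  case=> [[p a] [i p']]; have [Hd|Hd] := EM (ocn_Delta N p a (ord_update i) p').
    exact: semilinear_eventually_periodic (SL _ _ _ _ Hd).
  by exists 0, 1; split=> // m k _; split=> /good_ocn_Delta.
exists T, P; split=> // p a m k Hk.
rewrite /good_choice; apply: eq_pick => x; apply: asbool_equiv_eq.
by case: (HP (p, a, x)) => _; apply.
Qed.

Lemma good_choice_blocks : semilinear_strategy N -> exists M, 0 < M /\
  forall p a n r, good_choice p (n * M + r) a = good_choice p (if n == 0 then r else M + r) a.
Proof.
case/good_choice_periodic=> T [P [P_gt0 HP]].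
exists (P * T.+1); split=> [|p a [|n] r /=]; first by rewrite muln_gt0 P_gt0.
  by rewrite mul0n.
have -> : n.+1 * (P * T.+1) + r = P * T.+1 + r + (n * T.+1) * P by rewrite mulSn; nia.
by apply: HP; nia.
Qed.

End GoodChoice.

Section BlockAutomaton.
Variables (Sigma : finType) (N : ocn Sigma) (M : nat).
Hypothesis M_gt0 : 0 < M.
Hypothesis good_choice_blockE : forall (p : ocn_Q N) a n r,
  good_choice p (n * M + r) a = good_choice p (if n == 0 then r else M + r) a.

Definition block_delta (q : ocn_Q N * 'I_M) (z : bool) (a : Sigma) (d : int)
    (q' : ocn_Q N * 'I_M) : bool :=
  [&& d \in [:: (-1)%R; 0%R; 1%R], z ==> (d != (-1)%R) &
   if good_choice q.1 (if z then nat_of_ord q.2 else M + q.2) a is Some (i, p') then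
     (p' == q'.1) && (Posz q.2 + ord_update i == Posz q'.2 + d * Posz M)%R
   else false].

Lemma block_delta_wf q z a d q' : block_delta q z a d q' ->
  d \in [:: (-1)%R; 0%R; 1%R] /\ (z -> d \in [:: 0%R; 1%R]).
Proof.
case/and3P=> Hd Hz _; split=> // Z; move: Hz; rewrite Z /=.
by move: Hd; rewrite !inE => /or3P [] /eqP ->.
Qed.

Definition block_oca : oca Sigma :=
  @OCA Sigma (ocn_Q N * 'I_M)%type block_delta (ocn_q0 N, Ordinal M_gt0)
    [set q | q.1 \in ocn_F N] block_delta_wf.

Definition unblock (c : dconf block_oca) : nconf N := (c.1.1, c.2 * M + c.1.2).

Lemma unblock_init : unblock (oca_q0 block_oca, 0) = ninit N.
Proof. by rewrite /unblock /= mul0n. Qed.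

Lemma block_oca_deterministic : oca_deterministic block_oca.
Proof.
move=> [p r] z a d [p1 r1] d' [p2 r2] /and3P [Hd _ H1] /and3P [Hd' _ H2].
move: H1 H2 => /=; case: good_choice => // [[i q]] /andP [/eqP <- /eqP E1].
case/andP=> /eqP <- /eqP; rewrite E1 => E2.
have [-> Er] : d = d' /\ (r1 : nat) = r2.
  have := ltn_ord r1; have := ltn_ord r2.
  by move: Hd Hd' E2; rewrite !inE => /or3P [] /eqP -> /or3P [] /eqP -> E; split; lia.
by split=> //; congr pair; apply: val_inj.
Qed.

Lemma dstep_nstep c c' a d : dstep c a d c' -> exists dN, nstep (unblock c) a dN (unblock c').
Proof.
case: c c' => [[p r] n] [[p' r'] n'] [/and3P [_ _]] /=; rewrite -good_choice_blockE.
case E: good_choice => [[i q]|//] /andP [/eqP <- /eqP Er] Hn.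
exists (ord_update i); split; first exact: good_ocn_Delta (good_choice_good E).
exact: digit_carry_add Er Hn.
Qed.

Lemma dreach_nreach c c' w : dreach c w c' -> nreach (unblock c) w (unblock c').
Proof.
elim=> [{}c|{}c a d c1 {}w {}c' St _ IH]; first exact: nreach0.
by have [dN StN] := dstep_nstep St; apply: nreachS StN IH.
Qed.

Lemma nstep_dstep c a x k' : good_choice (unblock c).1 (unblock c).2 a = Some x ->
  nstep (unblock c) a (ord_update x.1) (x.2, k') ->
  exists d (c' : dconf block_oca), dstep c a d c' /\ unblock c' = (x.2, k').
Proof.
case: c x => [[p r] n] [i q] /= E [Hdel Hk].
have [d [r' [n' [r'_lt Hd Hz Er En]]]] := digit_carry_exists (ltn_ord r) (ocn_wf Hdel) Hk.
exists d, ((q, Ordinal r'_lt), n'); split.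
  split=> //=; rewrite /block_delta /= Hd Hz -good_choice_blockE E eqxx /=; exact/eqP.
by have := digit_carry_add Er En; rewrite Hk => -[->].
Qed.

Lemma nlang_from_dreach u c : eve_wins_g1 (unblock c) -> nlang_from (unblock c) u ->
  exists c', dreach c u c' /\ c'.1 \in oca_F block_oca.
Proof.
elim: u c => [|a u IH] [[p r] n] Hw Hl.
  case: Hl => c' [/nreach_nilE -> Fc].
  by exists ((p, r), n); split; [apply: dreach0 | rewrite inE].
have [d [p' [k' [G _]]]] := eve_wins_g1_good Hw Hl.
have [x Ex] := good_choice_some G; have Gx := good_choice_good Ex.
have [_ [_ [_ [k'' St]]]] := Gx.
have [dD [c' [Ds Ec']]] := nstep_dstep Ex St.
have Hw' : eve_wins_g1 (unblock c') by rewrite Ec'; apply: good_eve_wins_g1 Gx St.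
have Hl' : nlang_from (unblock c') u by rewrite Ec'; apply: good_nlang_from Gx St Hl.
have [c2 [R F2]] := IH c' Hw' Hl'.
by exists c2; split=> //; apply: dreachS Ds R.
Qed.

End BlockAutomaton.

Theorem lemma6 (Sigma : finType) (N : ocn Sigma) :
  history_deterministic N -> semilinear_strategy N ->
  exists D : oca Sigma, oca_deterministic D /\ (forall w, dlang D w <-> nlang N w).
Proof.
move=> HD SL; have [M [M_gt0 blocks]] := good_choice_blocks SL.
exists (block_oca N M_gt0); split=> [|w]; first exact: block_oca_deterministic.
split=> [[c [R Fc]]|Hw].
  exists (unblock c); rewrite inE in Fc; split=> //.
  by rewrite -(unblock_init N M_gt0); exact: (dreach_nreach blocks R).
apply: (nlang_from_dreach blocks); rewrite unblock_init //.
exact: history_deterministic_eve_wins_g1.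
Qed.
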